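(* Let $G=(V,E,w)$ be an $n$-vertex directed graph with real edge weights, let $h>0$ be an integer and $\tau\ge 2n^2$ an integer, and run the procedure $\textsc{DetPreprocessing}(G,\tau,h)$ described below. At termination: (1) $\textsc{Congestion}(v)\le\tau$ for every $v\in V$; (2) $\sum_{v\in V}\textsc{Congestion}(v)=O(n^3\log h)$; (3) $|C|=O(n^3\log h/\tau)$; (4) each computed path $\pi^i_{s,t}$ is an $h_i$-hop-improving shortest path in $G$ with regard to $G\setminus C$, where $C$ is the final set.
   Context: Let $i_h=\lceil \log_{3/2} h\rceil$ and $h_i=(3/2)^i$ for $i=0,\dots,i_h$. A path is $h'$-hop-restricted if it has at most $h'$ edges; $\mathbf{dist}^{h'}_H(s,t)$ denotes the minimum weight of an $h'$-hop-restricted $s$-to-$t$ path in $H$. For $C\subseteq V$, $G\setminus C$ denotes the induced subgraph $G[V\setminus C]$. A path $\pi_{s,t}$ from $s$ to $t$ is an $h'$-hop-improving shortest path in $G$ with regard to $H\subseteq G$ if it is a path in $G$ whose weight is at most $\mathbf{dist}^{h'}_H(s,t)$. The procedure $\textsc{DetPreprocessing}(G,\tau,h)$: initialize $C\gets\emptyset$, $\textsc{Congestion}(v)\gets 0$ for all $v\in V$, and $\pi^i_{s,t}\gets\bot$ (the empty path of weight $\infty$) for all $s,t,i$. Then process every vertex $s\in V$ exactly once as a root, in an arbitrary order; for each root $s$ and each $i\in[0,i_h]$ in turn: (1) compute, by Bellman-Ford from $s$ in $G[V\setminus C]$, paths $\pi^i_{s,t}$ for all $t\in V$ that are shortest among $h_i$-hop-restricted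 $s$-to-$t$ paths in $G[V\setminus C]$; (2) for every $t\in V$ and every vertex $u$ on $\pi^i_{s,t}$, increase $\textsc{Congestion}(u)$ by $\lceil n/h_i\rceil$; (3) set $C\gets\{v\in V:\textsc{Congestion}(v)>\tau/2\}$. *)

From mathcomp Require Import all_boot all_order all_algebra.
Set Implicit Arguments. Unset Strict Implicit. Unset Printing Implicit Defensive.
Import Order.TTheory GRing.Theory Num.Theory.
Local Open Scope ring_scope.

(* A directed graph G = (V,E,w) is an
   edge relation E : rel 'I_n together with real weights w (only used on
   edges).  R is any real domain (the reals being one instance). *)

Section Walks.
Variables (n : nat) (R : realDomainType).
Variables (E : rel 'I_n) (w : 'I_n -> 'I_n -> R).

Fixpoint pweight (x : 'I_n) (p : seq 'I_n) : R :=
  if p is y :: p' then w x y + pweight y p' else 0.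

Definition is_path_in (C : {set 'I_n}) (s t : 'I_n) (p : seq 'I_n) : bool :=
  [&& path E s p, last s p == t & all (fun v => v \notin C) (s :: p)].

(* h'-hop-restricted s-to-t path of G[V \ C] (size p = number of edges) *)
Definition hop_path (C : {set 'I_n}) (h' : nat) (s t : 'I_n) (p : seq 'I_n)
  : bool := is_path_in C s t p && (size p <= h')%N.

(* A computed path is an option: None = the empty path bot of weight +oo,
   Some p = the path s :: p. *)

(* pi is an h'-hop-improving shortest s-to-t path in G w.r.t. G \ C:
   pi is a path of G from s to t whose weight is at most
   dist^{h'}_{G\C}(s,t) (minimum over h'-hop paths, +oo if there is none). *)
Definition hop_improving (C : {set 'I_n}) (h' : nat) (s t : 'I_n)
    (pi : option (seq 'I_n)) : Prop :=
  match pi with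
  | Some p => is_path_in set0 s t p /\
              (forall q, hop_path C h' s t q -> pweight s p <= pweight s q)
  | None => forall q, ~~ hop_path C h' s t q
  end.

(* pi is a shortest path among the h'-hop-restricted s-to-t paths of
   G[V \ C] (None when no such path exists): the specification of the
   output of hop-restricted Bellman-Ford. *)
Definition hop_shortest (C : {set 'I_n}) (h' : nat) (s t : 'I_n)
    (pi : option (seq 'I_n)) : Prop :=
  match pi with
  | Some p => hop_path C h' s t p /\
              (forall q, hop_path C h' s t q -> pweight s p <= pweight s q)
  | None => forall q, ~~ hop_path C h' s t q
  end.

End Walks.

(* i_h = ceil(log_{3/2} h) = least i with (3/2)^i >= h, i.e. h 2^i <= 3^i *)
Lemma ih_exists (h : nat) : exists i, (h * 2 ^ i <= 3 ^ i)%N.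
Proof.
exists (2 * h)%N.
have H1 : (h <= 2 ^ h)%N by apply: ltnW; apply: ltn_expl.
apply: (leq_trans (leq_mul H1 (leqnn _))).
rewrite -expnD (mulnC 2 h) !expnM.
have -> : (h + h * 2 = h * 3)%N by rewrite -mulnS.
rewrite !(mulnC h) !expnM.
rewrite -(expnM 3 h 2) (mulnC h 2) (expnM 3 2 h).
by case: h H1 => [|h] _ //; rewrite leq_exp2r.
Qed.

Definition i_h (h : nat) : nat := ex_minn (ih_exists h).

(* hop bound h_i = (3/2)^i : a path is h_i-hop restricted iff it has at most
   floor((3/2)^i) = 3^i %/ 2^i edges *)
Definition hop_bound (i : nat) : nat := (3 ^ i %/ 2 ^ i)%N.

(* ceil(n / h_i) = ceil(n 2^i / 3^i) *)
Definition cong_incr (n i : nat) : nat := ((n * 2 ^ i + 3 ^ i).-1 %/ 3 ^ i)%N.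

Definition verts (n : nat) (s : 'I_n) (pi : option (seq 'I_n)) : seq 'I_n :=
  if pi is Some p then s :: p else [::].

Record dp_state (n : nat) := DPState {
  congestion : 'I_n -> nat;
  cset : {set 'I_n};
  paths : 'I_n -> nat -> 'I_n -> option (seq 'I_n) (* pi^i_{s,t} = paths s i t *)
}.

(* A Bellman-Ford oracle: given root s, index i and current set C, returns
   for every t the computed path pi^i_{s,t} in G[V \ C]. *)
Definition bf_oracle (n : nat) :=
  'I_n -> nat -> {set 'I_n} -> 'I_n -> option (seq 'I_n).

Definition valid_oracle (n : nat) (R : realDomainType) (E : rel 'I_n)
    (w : 'I_n -> 'I_n -> R) (bf : bf_oracle n) : Prop :=
  forall s i C t, hop_shortest E w C (hop_bound i) s t (bf s i C t).

(* One step (root s, index i): (1) compute the paths, (2) update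
   congestion, (3) recompute C = {v | Congestion(v) > tau/2}. *)
Definition dp_step (n : nat) (bf : bf_oracle n) (tau : nat)
    (st : dp_state n) (si : 'I_n * nat) : dp_state n :=
  let: (s, i) := si in
  let P := bf s i (cset st) in
  let cong' := fun v => (congestion st v +
                  \sum_(t : 'I_n | v \in verts s (P t)) cong_incr n i)%N in
  DPState cong' [set v | (tau < 2 * cong' v)%N]
    (fun s' i' t => if (s' == s) && (i' == i) then P t else paths st s' i' t).

Definition dp_init (n : nat) : dp_state n :=
  DPState (fun _ => 0%N) set0 (fun _ _ _ => None).

Definition det_preprocessing (n : nat) (bf : bf_oracle n) (tau h : nat)
    (order : seq 'I_n) : dp_state n :=
  foldl (dp_step bf tau) (dp_init n)
    [seq (s, i) | s <- order, i <- iota 0 (i_h h).+1].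

From mathcomp Require Import all_boot all_order all_algebra.
From mathcomp Require Import zify.
Import Order.TTheory GRing.Theory Num.Theory.

Set Implicit Arguments. Unset Strict Implicit. Unset Printing Implicit Defensive.

(* The congestion charged to the vertices of one path is at most
   (h_i + 1) ceil(n / h_i) <= 3n, so a step (s, i) adds at most 3n^2 in total,
   and the n (i_h + 1) = O(n log h) steps add O(n^3 log h).  A vertex below
   the threshold tau/2 gains at most n^2 <= tau/2 in one step, and a vertex
   above it lies in C and is avoided by all later paths, so no congestion
   exceeds tau.  Congestion only grows, hence C only grows, and a path that is
   shortest in G \ C' for an earlier C' is hop-improving w.r.t. the final C. *)

Lemma leq_exp2_exp3 i : (2 ^ i <= 3 ^ i)%N.
Proof. by case: i => [|i] //; rewrite leq_exp2r. Qed.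

Lemma cong_incr_ceil n i : (cong_incr n i * 3 ^ i < n * 2 ^ i + 3 ^ i)%N.
Proof.
have pos3 : (0 < 3 ^ i)%N by rewrite expn_gt0.
rewrite /cong_incr; apply: leq_ltn_trans (leq_divM _ _) _; lia.
Qed.

Lemma cong_incr_le n i : (cong_incr n i <= n)%N.
Proof.
have pos3 : (0 < 3 ^ i)%N by rewrite expn_gt0.
rewrite -ltnS -(ltn_pmul2r pos3) mulSn.
apply: leq_trans (cong_incr_ceil n i) _.
by rewrite addnC leq_add2l leq_mul2l leq_exp2_exp3 orbT.
Qed.

(* With H = 3^i/2^i and k <= min(n, H + 1):
   k ceil(n/H) < k (n/H + 1) <= n + n/H + n <= 3n. *)
Lemma path_load_le n i k : (k <= n)%N -> (k <= (hop_bound i).+1)%N ->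
  (k * cong_incr n i <= 3 * n)%N.
Proof.
move=> le_kn le_kH.
have pos3 : (0 < 3 ^ i)%N by rewrite expn_gt0.
have le23 := leq_exp2_exp3 i.
have floorH : (hop_bound i * 2 ^ i <= 3 ^ i)%N by apply: leq_divM.
have ceilq := cong_incr_ceil n i.
rewrite -(leq_pmul2r pos3) -mulnA.
apply: leq_trans (leq_mul (leqnn k) (ltnW ceilq)) _.
rewrite mulnDr.
have le_kb : (k * (n * 2 ^ i) <= 2 * n * 3 ^ i)%N.
  apply: leq_trans (leq_mul le_kH (leqnn _)) _.
  rewrite mulSn mulnCA; nia.
nia.
Qed.

Lemma i_h_le h : (i_h h <= 2 * (trunc_log 2 h).+1)%N.
Proof.
rewrite /i_h; case: ex_minnP => m _; apply.
set L := (trunc_log 2 h).+1.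
have lt_h : (h < 2 ^ L)%N by apply: trunc_log_ltn.
rewrite !expnM.
apply: (@leq_trans (2 ^ L * 4 ^ L)); first by rewrite leq_mul2r ltnW ?orbT.
by rewrite -expnMn leq_exp2r.
Qed.

Lemma card_threshold_le (T : finType) (f : T -> nat) tau :
  (#|[set v | tau < 2 * f v]| * tau <= 2 * \sum_v f v)%N.
Proof.
rewrite -sum_nat_const big_distrr /=.
apply: (@leq_trans (\sum_(v in [set v | tau < 2 * f v]) 2 * f v)%N).
  by apply: leq_sum => v; rewrite inE => /ltnW.
by rewrite [leqRHS](bigID (mem [set v | tau < 2 * f v])) leq_addr.
Qed.

Section HopPaths.
Variables (n : nat) (R : realDomainType) (E : rel 'I_n) (w : 'I_n -> 'I_n -> R).

Lemma hop_path_subset (C C' : {set 'I_n}) h' s t q : C \subset C' ->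
  hop_path E C' h' s t q -> hop_path E C h' s t q.
Proof.
move=> sCC' /andP[/and3P[pq lq avoid] sz].
rewrite /hop_path /is_path_in pq lq sz andbT.
by apply/allP => v /(allP avoid); apply: contra; apply: (subsetP sCC').
Qed.

Lemma hop_shortest_improving (C C' : {set 'I_n}) h' s t pi : C \subset C' ->
  hop_shortest E w C h' s t pi -> hop_improving E w C' h' s t pi.
Proof.
move=> sCC'; case: pi => [p|] /=; last first.
  by move=> none q; apply: contraL (none q) => /(hop_path_subset sCC') ->.
case=> /andP[/and3P[pp lp _] _] pmin; split.
  by rewrite /is_path_in pp lp /= in_set0; apply/allP => v; rewrite in_set0.
by move=> q /(hop_path_subset sCC'); apply: pmin.
Qed.

End HopPaths.

Section Preprocessing.
Variables (n : nat) (R : realDomainType) (E : rel 'I_n) (w : 'I_n -> 'I_n -> R).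
Variables (bf : bf_oracle n) (tau : nat).
Hypothesis bf_valid : valid_oracle E w bf.

Definition step_load (s : 'I_n) (i : nat) (C : {set 'I_n}) (v : 'I_n) : nat :=
  \sum_(t : 'I_n | v \in verts s (bf s i C t)) cong_incr n i.

Lemma bf_verts_avoid s i (C : {set 'I_n}) t v :
  v \in C -> v \notin verts s (bf s i C t).
Proof.
move=> vC; have := bf_valid s i C t; case: (bf s i C t) => [p|] //= [/andP[]].
by case/and3P=> _ _ /allP avoid _ _; apply/negP => /avoid; rewrite vC.
Qed.

Lemma bf_verts_card s i C t : (#|verts s (bf s i C t)| <= (hop_bound i).+1)%N.
Proof.
apply: leq_trans (card_size _) _.
by have := bf_valid s i C t; case: (bf s i C t) => [p|] //= [/andP[_]].
Qed.

Lemma step_load_blocked s i (C : {set 'I_n}) v :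
  v \in C -> step_load s i C v = 0%N.
Proof.
by move=> vC; rewrite /step_load big_pred0 // => t; apply/negbTE/bf_verts_avoid.
Qed.

Lemma step_load_le s i C v : (step_load s i C v <= n * n)%N.
Proof.
apply: (@leq_trans (\sum_(t : 'I_n) cong_incr n i)).
  by rewrite [leqRHS](bigID (fun t => v \in verts s (bf s i C t))) leq_addr.
by rewrite sum_nat_const card_ord leq_mul2l cong_incr_le orbT.
Qed.

Lemma sum_step_load_le s i C : (\sum_v step_load s i C v <= 3 * n ^ 2)%N.
Proof.
rewrite /step_load (exchange_big_dep xpredT) //=.
apply: (@leq_trans (\sum_(t : 'I_n) 3 * n)%N).
  apply: leq_sum => t _; rewrite sum_nat_const.
  apply: path_load_le; last exact: bf_verts_card.
  by rewrite -[leqRHS]card_ord max_card.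
by rewrite sum_nat_const card_ord; lia.
Qed.

Definition overloaded (st : dp_state n) : {set 'I_n} :=
  [set v | tau < 2 * congestion st v].

Definition dp_invariant (st : dp_state n) : Prop :=
  cset st = overloaded st /\ forall v, (congestion st v <= tau)%N.

Definition paths_shortest_for (st : dp_state n) (S : seq ('I_n * nat)) : Prop :=
  forall s i t, (s, i) \in S -> exists2 C : {set 'I_n},
    C \subset cset st & hop_shortest E w C (hop_bound i) s t (paths st s i t).

Lemma dp_step_congestion st s i v :
  congestion (dp_step bf tau st (s, i)) v =
  (congestion st v + step_load s i (cset st) v)%N.
Proof. by []. Qed.

Lemma dp_step_cset st si :
  cset (dp_step bf tau st si) = overloaded (dp_step bf tau st si).
Proof. by case: si. Qed.

Lemma dp_init_invariant : dp_invariant (dp_init n).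
Proof. by split=> //; apply/setP => v; rewrite !inE muln0. Qed.

Hypothesis tau_ge : (2 * n ^ 2 <= tau)%N.

Lemma dp_step_invariant st si :
  dp_invariant st -> dp_invariant (dp_step bf tau st si).
Proof.
case: si => s i [Cst le_tau]; split=> [|v]; first exact: dp_step_cset.
rewrite dp_step_congestion.
have [vC|vNC] := boolP (v \in cset st); first by rewrite step_load_blocked ?addn0.
have low_v : (2 * congestion st v <= tau)%N by move: vNC; rewrite Cst inE -leqNgt.
have := step_load_le s i (cset st) v; move: tau_ge; rewrite expnS expn1; lia.
Qed.

Lemma dp_step_cset_mono st si :
  dp_invariant st -> cset st \subset cset (dp_step bf tau st si).
Proof.
case: si => s i [Cst _]; apply/subsetP => v.
rewrite dp_step_cset Cst !inE dp_step_congestion.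
by move/leq_trans; apply; rewrite leq_mul2l leq_addr orbT.
Qed.

Lemma dp_step_total st s i :
  (\sum_v congestion (dp_step bf tau st (s, i)) v <=
   \sum_v congestion st v + 3 * n ^ 2)%N.
Proof. by rewrite big_split leq_add2l sum_step_load_le. Qed.

Lemma dp_step_paths_shortest st S s i : dp_invariant st ->
  paths_shortest_for st S ->
  paths_shortest_for (dp_step bf tau st (s, i)) (rcons S (s, i)).
Proof.
move=> Ist shortS s' i' t; rewrite mem_rcons inE xpair_eqE.
have mono := dp_step_cset_mono (s, i) Ist.
have [/andP[/eqP-> /eqP->] _|new] := boolP ((s' == s) && (i' == i)).
  by exists (cset st) => //=; rewrite !eqxx.
move=> /(shortS s' i' t)[C sC shortC].
exists C; first exact: subset_trans sC mono.
by rewrite /= (negbTE new).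
Qed.

Lemma foldl_dp_invariant l st :
  dp_invariant st -> dp_invariant (foldl (dp_step bf tau) st l).
Proof. by elim: l st => //= si l IH st /(dp_step_invariant si)/IH. Qed.

Lemma foldl_dp_total l st :
  (\sum_v congestion (foldl (dp_step bf tau) st l) v <=
   \sum_v congestion st v + 3 * n ^ 2 * size l)%N.
Proof.
elim: l st => [|[s i] l IH] st /=; first by rewrite muln0 addn0.
apply: leq_trans (IH _) _.
by rewrite mulnS addnA leq_add2r dp_step_total.
Qed.

Lemma foldl_dp_paths_shortest l st S : dp_invariant st ->
  paths_shortest_for st S ->
  paths_shortest_for (foldl (dp_step bf tau) st l) (S ++ l).
Proof.
elim: l st S => [|[s i] l IH] st S Ist shortS; first by rewrite cats0.
rewrite -cat_rcons; apply: IH; first exact: dp_step_invariant.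
exact: dp_step_paths_shortest.
Qed.

End Preprocessing.

Theorem lemma3p4 :
  exists c : nat,
  forall (R : realDomainType) (n : nat) (E : rel 'I_n) (w : 'I_n -> 'I_n -> R)
         (h tau : nat) (order : seq 'I_n) (bf : bf_oracle n),
    (0 < h)%N -> (2 * n ^ 2 <= tau)%N ->
    perm_eq order (enum 'I_n) ->
    valid_oracle E w bf ->
    let st := det_preprocessing bf tau h order in
    [/\ (forall v, congestion st v <= tau)%N,
        (\sum_(v : 'I_n) congestion st v <= c * n ^ 3 * (trunc_log 2 h).+1)%N,
        (#|cset st| * tau <= c * n ^ 3 * (trunc_log 2 h).+1)%N
      & forall (s t : 'I_n) (i : nat), (i <= i_h h)%N ->
          hop_improving E w (cset st) (hop_bound i) s t (paths st s i t)].
Proof.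
exists 18%N => R n E w h tau order bf _ tau_ge order_perm bf_valid /=.
rewrite /det_preprocessing; set l := [seq (s, i) | s <- order, i <- _].
set st := foldl _ _ _; set L := (trunc_log 2 h).+1.
have [Cst le_tau] : dp_invariant tau st.
  exact/(foldl_dp_invariant bf_valid tau_ge)/dp_init_invariant.
have size_l : size l = (n * (i_h h).+1)%N.
  by rewrite size_allpairs size_iota (perm_size order_perm) size_enum_ord.
have total : (\sum_v congestion st v <= 9 * n ^ 3 * L)%N.
  apply: leq_trans (foldl_dp_total tau bf_valid l _) _.
  rewrite big1 // add0n size_l; have := i_h_le h; rewrite -/L; nia.
split=> //.
- by apply: leq_trans total _; rewrite -!mulnA leq_mul2r orbT.
- rewrite Cst; apply: leq_trans (card_threshold_le (congestion st) tau) _.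
  by move: total; nia.
- move=> s t i le_i_ih.
  have l_si : (s, i) \in [::] ++ l.
    by rewrite allpairs_f ?(perm_mem order_perm) ?mem_enum ?mem_iota.
  have init_paths : paths_shortest_for E w (dp_init n) [::] by [].
  have [C sC shortC] := foldl_dp_paths_shortest bf_valid tau_ge
    (dp_init_invariant n tau) init_paths t l_si.
  exact: hop_shortest_improving sC shortC.
Qed.
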